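(* $d^2\,(d')^2=\delta^2\,(1-d^2)\,(d^2-\lambda^2)$.
   Context: Let $0<\kappa<1$ and $\lambda=\sqrt{1-\kappa^2}$. Let $F(\tfrac16,\tfrac56;\tfrac12;\cdot)$ denote the Gauss hypergeometric function. Define $u$ as a function of $\phi$ near $0$ by $u=\int_0^{\sin\phi}F(\tfrac16,\tfrac56;\tfrac12;\kappa^2t^2)\,\frac{dt}{\sqrt{1-t^2}}$; near the origin (fixing $0$) this inverts to a holomorphic function $u\mapsto\phi(u)$ with $\phi(0)=0$. Let $\psi$ be the holomorphic function near $0$ with $\psi(0)=0$ and $\sin\psi=\kappa\sin\phi$. Set $d=\cos\psi$ and $\delta=\phi'$, as functions of $u$ on a small disc about $0$; primes denote $d/du$. *)

From Stdlib Require Import Reals Factorial.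
From Coquelicot Require Import Coquelicot.
Open Scope R_scope.

(* Sum of a convergent complex series (the unique limit; junk if divergent). *)
Definition Cseries (a : nat -> C) : C :=
  @iota (CompleteNormedModule.CompleteSpace C_AbsRing C_CompleteNormedModule)
    (fun l : C => @is_series C_AbsRing C_NormedModule a l).

Fixpoint Cpow (z : C) (n : nat) : C :=
  match n with O => RtoC 1 | S m => Cmult z (Cpow z m) end.

Definition Cexp (z : C) : C :=
  Cseries (fun n => Cmult (RtoC (/ INR (fact n))) (Cpow z n)).
Definition Csin (z : C) : C :=
  Cdiv (Cminus (Cexp (Cmult Ci z)) (Cexp (Copp (Cmult Ci z)))) (Cmult (RtoC 2) Ci).
Definition Ccos (z : C) : C :=
  Cdiv (Cplus (Cexp (Cmult Ci z)) (Cexp (Copp (Cmult Ci z)))) (RtoC 2).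

Definition Csqrt (w : C) : C :=
  let x := fst w in let y := snd w in
  (sqrt ((Cmod w + x) / 2),
   (if Rlt_dec y 0 then -1 else 1) * sqrt ((Cmod w - x) / 2)).

Fixpoint poch (a : R) (n : nat) : R :=
  match n with O => 1 | S m => poch a m * (a + INR m) end.

Definition hyp2F1 (a b c : R) (z : C) : C :=
  Cseries (fun n => Cmult (RtoC (poch a n * poch b n / (poch c n * INR (fact n))))
                          (Cpow z n)).

(* u(phi) = int_0^{sin phi} F(1/6,5/6;1/2;kappa^2 t^2) dt / sqrt(1-t^2),
   the complex integral taken along the segment t = s * sin phi, s in [0,1]. *)
Definition u_of (kappa : R) (phi : C) : C :=
  let z := Csin phi in
  @RInt C_R_CompleteNormedModule
    (fun s : R =>
       let t := Cmult (RtoC s) z in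
       Cmult (Cdiv (hyp2F1 (1/6) (5/6) (1/2) (Cmult (RtoC (kappa ^ 2)) (Cmult t t)))
                   (Csqrt (Cminus (RtoC 1) (Cmult t t))))
             z) 0 1.

Definition in_disc (r : R) (w : C) : Prop := Cmod w < r.

Definition Cderiv (f : C -> C) (w l : C) : Prop :=
  @is_derive C_AbsRing C_NormedModule f w l.

From Pilot Require Import Defs.
From Stdlib Require Import Reals Lra Lia Factorial.
From Coquelicot Require Import Coquelicot.
Open Scope R_scope.

(* Differentiating
   gives psi' cos psi = kappa delta cos phi, and d' = - psi' sin psi, so
   d^2 d'^2 = kappa^4 delta^2 sin^2 phi cos^2 phi, which is the right-hand side once
   sin^2 + cos^2 = 1 is applied to phi and to psi.

   For the series-defined exponential, Cexp' = Cexp follows from the termwise bound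
   |(z+h)^n - z^n - n h z^(n-1)| <= n(n-1)/2 |h|^2 (|z|+|h|)^(n-2).  Then sin' = cos and
   cos' = - sin, and Cexp w * Cexp (-w) = 1 because its derivative vanishes (it is
   constant along every ray from 0), which gives sin^2 + cos^2 = 1. *)

Lemma is_series_exp (x : R) : is_series (fun n => x ^ n / INR (fact n)) (exp x).
Proof.
  eapply is_series_ext; [|apply (is_exp_Reals x)].
  intros n. simpl. rewrite pow_n_pow. unfold scal, mult. simpl. unfold mult. simpl.
  unfold Rdiv. ring.
Qed.

Section ComplexAnalysis.
Local Open Scope C_scope.

Lemma Cseries_correct (a : nat -> C) (l : C) :
  is_series (V := C_NormedModule) a l -> Cseries a = l.
Proof.
  intros Hl. apply (iota_unique (V := C_CompleteNormedModule)); [|exact Hl].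
  intros l' Hl'.
  assert (FF : ProperFilter' eventually) by apply Proper_StrongProper, eventually_filter.
  exact (filterlim_locally_unique (K := C_AbsRing) (V := C_NormedModule) (FF := FF)
           (sum_n a) l' l Hl' Hl).
Qed.

Lemma Cmod_sum_n_le (a : nat -> C) (b : nat -> R) (N : nat) :
  (forall n, Cmod (a n) <= b n) -> Cmod (sum_n a N) <= sum_n b N.
Proof.
  intros Hab. induction N as [|N IH].
  - rewrite !sum_O. apply Hab.
  - rewrite !sum_Sn. eapply Rle_trans; [apply Cmod_triangle|].
    apply Rplus_le_compat; [exact IH | apply Hab].
Qed.

Lemma Cmod_series_le (a : nat -> C) (b : nat -> R) (la : C) (lb : R) :
  is_series (V := C_NormedModule) a la -> is_series b lb ->
  (forall n, Cmod (a n) <= b n) -> Cmod la <= lb.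
Proof.
  intros Ha Hb Hab.
  assert (Hmod : is_lim_seq (fun N => Cmod (sum_n a N)) (Cmod la)).
  { change (filterlim (fun N => @norm C_AbsRing C_NormedModule (sum_n a N)) eventually
                      (locally (@norm C_AbsRing C_NormedModule la))).
    eapply filterlim_comp; [exact Ha | apply filterlim_norm]. }
  assert (Hsum : is_lim_seq (sum_n b) lb) by exact Hb.
  exact (is_lim_seq_le _ _ _ _ (fun N => Cmod_sum_n_le a b N Hab) Hmod Hsum).
Qed.

Lemma is_series_shift (a : nat -> C) (l : C) :
  is_series (V := C_NormedModule) a l ->
  is_series (V := C_NormedModule) (fun n => a (S n)) (l - a O).
Proof.
  intros Ha. apply is_series_incr_1.
  change (is_series (V := C_NormedModule) a (l - a O + a O)).
  replace (l - a O + a O) with l by ring. exact Ha.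
Qed.

(* [C_NormedModule] and [AbsRing_NormedModule C_AbsRing] are the same normed module but are
   not convertible; Coquelicot states the chain and product rules for the latter. *)
Lemma Cderiv_AbsRing (f : C -> C) (z l : C) :
  Cderiv f z l <-> is_derive (V := AbsRing_NormedModule C_AbsRing) f z l.
Proof.
  split; intros [[Hplus Hscal [M HM]] Hdom]; split; auto; split; auto; exists M; exact HM.
Qed.

Lemma Cderiv_unique (f : C -> C) (z l1 l2 : C) :
  Cderiv f z l1 -> Cderiv f z l2 -> l1 = l2.
Proof.
  intros H1 H2. rewrite <- (is_C_derive_unique f z l1 H1). apply is_C_derive_unique, H2.
Qed.

Lemma Cderiv_comp (f g : C -> C) (z lf lg : C) :
  Cderiv f (g z) lf -> Cderiv g z lg -> Cderiv (fun v => f (g v)) z (lg * lf).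
Proof.
  intros Hf Hg. apply Cderiv_AbsRing in Hg.
  exact (is_derive_comp (V := C_NormedModule) f g z lf lg Hf Hg).
Qed.

Lemma Cderiv_plus (f g : C -> C) (z lf lg : C) :
  Cderiv f z lf -> Cderiv g z lg -> Cderiv (fun v => f v + g v) z (lf + lg).
Proof. apply (is_derive_plus (K := C_AbsRing) (V := C_NormedModule)). Qed.

Lemma Cderiv_minus (f g : C -> C) (z lf lg : C) :
  Cderiv f z lf -> Cderiv g z lg -> Cderiv (fun v => f v - g v) z (lf - lg).
Proof. apply (is_derive_minus (K := C_AbsRing) (V := C_NormedModule)). Qed.

Lemma Cderiv_mult (f g : C -> C) (z lf lg : C) :
  Cderiv f z lf -> Cderiv g z lg -> Cderiv (fun v => f v * g v) z (lf * g z + f z * lg).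
Proof.
  rewrite !Cderiv_AbsRing. intros Hf Hg.
  exact (is_derive_mult f g z lf lg Hf Hg Cmult_comm).
Qed.

Lemma Cderiv_mult_const (f : C -> C) (z l k : C) :
  Cderiv f z l -> Cderiv (fun v => f v * k) z (l * k).
Proof.
  rewrite Cderiv_AbsRing. apply (is_derive_scal_l (K := C_AbsRing) (V := C_NormedModule)).
Qed.

Lemma Cderiv_of_quadratic_remainder (f : C -> C) (z l : C) (K : R) :
  0 <= K ->
  (forall h, Cmod h <= 1 -> Cmod (f (z + h) - f z - h * l) <= K * Cmod h ^ 2) ->
  Cderiv f z l.
Proof.
  intros HK Hrem. split; [apply (is_linear_scal_l (K := C_AbsRing))|].
  intros x Hx eps.
  apply (is_filter_lim_locally_unique (K := C_AbsRing) (V := AbsRing_NormedModule C_AbsRing))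
    in Hx. subst x.
  apply (locally_norm_le_locally (K := C_AbsRing) (V := AbsRing_NormedModule C_AbsRing)).
  pose proof (cond_pos eps).
  assert (Hdelta : 0 < Rmin 1 (eps / (K + 1)))
    by (apply Rmin_pos; [lra | apply Rdiv_lt_0_compat; lra]).
  exists (mkposreal _ Hdelta). intros y Hy.
  change (Cmod (y - z) < Rmin 1 (eps / (K + 1))) in Hy.
  change (Cmod (f y - f z - (y - z) * l) <= eps * Cmod (y - z)).
  replace y with (z + (y - z)) at 1 by ring.
  set (h := y - z) in *.
  pose proof (Rmin_l 1 (eps / (K + 1))). pose proof (Rmin_r 1 (eps / (K + 1))).
  pose proof (Cmod_ge_0 h).
  assert (HKh : K * Cmod h <= eps).
  { apply Rle_trans with ((K + 1) * (eps / (K + 1)))%R; [|right; field; lra].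
    apply Rmult_le_compat; lra. }
  eapply Rle_trans; [apply Hrem; lra|].
  simpl. nra.
Qed.

Lemma is_derive_ray (F : C -> C) (w l : C) (t : R) :
  Cderiv F (RtoC t * w) l ->
  is_derive (K := R_AbsRing) (V := C_R_NormedModule) (fun s : R => F (RtoC s * w)) t (w * l).
Proof.
  intros [_ HF]. split; [apply (is_linear_scal_l (K := R_AbsRing))|].
  intros x Hx eps.
  apply (is_filter_lim_locally_unique (K := R_AbsRing) (V := R_NormedModule)) in Hx. subst x.
  pose proof (cond_pos eps). pose proof (Cmod_ge_0 w).
  assert (Heps' : 0 < eps / (Cmod w + 1)) by (apply Rdiv_lt_0_compat; lra).
  destruct (HF (RtoC t * w) (fun P HP => HP) (mkposreal _ Heps')) as [delta Hdelta].
  assert (Hdelta' : 0 < delta / (Cmod w + 1))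
    by (apply Rdiv_lt_0_compat; [apply cond_pos | lra]).
  exists (mkposreal _ Hdelta'). intros s Hs.
  change (Rabs (s - t) < delta / (Cmod w + 1)) in Hs.
  assert (Hdist : (Cmod (RtoC s * w - RtoC t * w) = Rabs (s - t) * Cmod w)%R).
  { rewrite <- Cmod_R, <- Cmod_mult, RtoC_minus. f_equal. ring. }
  assert (Hclose : Cmod (RtoC s * w - RtoC t * w) < delta).
  { rewrite Hdist. apply Rle_lt_trans with (Rabs (s - t) * (Cmod w + 1))%R.
    - apply Rmult_le_compat_l; [apply Rabs_pos | lra].
    - apply Rlt_div_r; [lra | exact Hs]. }
  specialize (Hdelta _ Hclose).
  change (Cmod (F (RtoC s * w) - F (RtoC t * w) - (RtoC s * w - RtoC t * w) * l)
          <= eps / (Cmod w + 1) * Cmod (RtoC s * w - RtoC t * w)) in Hdelta.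
  rewrite <- !Cmod_norm. change (minus s t) with (s - t)%R.
  rewrite scal_R_Cmult.
  change (Cmod (F (RtoC s * w) - F (RtoC t * w) - RtoC (s - t) * (w * l))
          <= eps * Rabs (s - t)).
  replace (RtoC (s - t) * (w * l)) with ((RtoC s * w - RtoC t * w) * l)
    by (rewrite RtoC_minus; ring).
  eapply Rle_trans; [exact Hdelta|]. rewrite Hdist.
  pose proof (Rabs_pos (s - t)).
  apply Rle_trans with (eps / (Cmod w + 1) * (Rabs (s - t) * (Cmod w + 1)))%R.
  - apply Rmult_le_compat_l; [lra|]. apply Rmult_le_compat_l; lra.
  - right. field. lra.
Qed.

Lemma Cderiv_zero_constant (F : C -> C) :
  (forall v, Cderiv F v 0) -> forall w, F w = F 0.
Proof.
  intros HF w.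
  replace w with (RtoC 1 * w) at 1 by ring.
  replace (F 0) with (F (RtoC 0 * w)) by (f_equal; ring).
  symmetry. apply (eq_is_derive (V := C_R_NormedModule) (fun s => F (RtoC s * w))); [|lra].
  intros t _. pose proof (is_derive_ray F w 0 t (HF _)) as Hray.
  rewrite Cmult_0_r in Hray. exact Hray.
Qed.

Lemma locally_in_disc (r : R) (w : C) :
  in_disc r w -> locally (T := AbsRing_UniformSpace C_AbsRing) w (in_disc r).
Proof.
  unfold in_disc. intros Hw.
  assert (Hgap : 0 < r - Cmod w) by lra.
  exists (mkposreal _ Hgap). intros v Hv.
  change (Cmod (v - w) < r - Cmod w) in Hv.
  replace v with (w + (v - w)) by ring.
  eapply Rle_lt_trans; [apply Cmod_triangle | lra].
Qed.

Definition exp_term (z : C) (n : nat) : C := RtoC (/ INR (fact n)) * z ^ n.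

Lemma exp_term_0 (z : C) : exp_term z 0 = 1.
Proof. unfold exp_term. simpl. rewrite Rinv_1. ring. Qed.

Lemma exp_term_1 (z : C) : exp_term z 1 = z.
Proof. unfold exp_term. simpl. rewrite Rinv_1. ring. Qed.

Lemma Cmod_exp_term (z : C) (n : nat) : Cmod (exp_term z n) = (Cmod z ^ n / INR (fact n))%R.
Proof.
  unfold exp_term. rewrite Cmod_mult, Cmod_pow, Cmod_R, Rabs_pos_eq.
  - unfold Rdiv. apply Rmult_comm.
  - left. apply Rinv_0_lt_compat, INR_fact_lt_0.
Qed.

Lemma is_series_Cexp (z : C) : is_series (V := C_NormedModule) (exp_term z) (Cexp z).
Proof.
  assert (Hex : ex_series (V := C_CompleteNormedModule) (exp_term z)).
  { apply (ex_series_le (K := C_AbsRing) _ (fun n => Cmod z ^ n / INR (fact n))%R).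
    - intros n. change (Cmod (exp_term z n) <= Cmod z ^ n / INR (fact n))%R.
      rewrite Cmod_exp_term. apply Rle_refl.
    - eexists. apply is_series_exp. }
  destruct Hex as [l Hl]. unfold Cexp.
  change (fun n => RtoC (/ INR (fact n)) * Defs.Cpow z n) with (exp_term z).
  rewrite (Cseries_correct _ l Hl). exact Hl.
Qed.

Definition Cpow_remainder (z h : C) (n : nat) : C :=
  (z + h) ^ S (S n) - z ^ S (S n) - RtoC (INR (S (S n))) * h * z ^ S n.

Lemma Cpow_remainder_succ (z h : C) (n : nat) :
  Cpow_remainder z h (S n) =
  (z + h) * Cpow_remainder z h n + RtoC (INR (S (S n))) * (h * h) * z ^ S n.
Proof.
  unfold Cpow_remainder. rewrite !(S_INR (S (S n))), RtoC_plus.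
  change ((z + h) ^ S (S (S n))) with ((z + h) * (z + h) ^ S (S n)).
  change (z ^ S (S (S n))) with (z * z ^ S (S n)).
  change (z ^ S (S n)) with (z * z ^ S n).
  ring.
Qed.

Lemma Cmod_Cpow_remainder_le (z h : C) (n : nat) :
  (Cmod (Cpow_remainder z h n)
  <= INR (S n) * INR (S (S n)) / 2 * Cmod h ^ 2 * (Cmod z + Cmod h) ^ n)%R.
Proof.
  pose proof (Cmod_ge_0 z). pose proof (Cmod_ge_0 h).
  set (rho := (Cmod z + Cmod h)%R).
  induction n as [|n IH].
  - replace (Cpow_remainder z h 0) with (h * h)
      by (unfold Cpow_remainder; simpl; rewrite RtoC_plus; ring).
    rewrite Cmod_mult. simpl. lra.
  - rewrite Cpow_remainder_succ.
    eapply Rle_trans; [apply Cmod_triangle|].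
    rewrite !Cmod_mult, Cmod_pow, Cmod_R, Rabs_pos_eq by apply pos_INR.
    assert (Hzh : Cmod (z + h) <= rho) by apply Cmod_triangle.
    assert (Hz : Cmod z ^ S n <= rho ^ S n) by (apply pow_incr; unfold rho; lra).
    pose proof (pos_INR n).
    apply Rle_trans with
      (rho * (INR (S n) * INR (S (S n)) / 2 * Cmod h ^ 2 * rho ^ n)
       + INR (S (S n)) * (Cmod h * Cmod h) * rho ^ S n)%R.
    + apply Rplus_le_compat.
      * apply Rmult_le_compat; auto using Cmod_ge_0.
      * apply Rmult_le_compat_l; [|exact Hz].
        apply Rmult_le_pos; [apply pos_INR | apply Rmult_le_pos; lra].
    + right. rewrite !S_INR. simpl. field.
Qed.

Lemma exp_term_remainder (z h : C) (n : nat) :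
  exp_term (z + h) (S (S n)) - exp_term z (S (S n)) - h * exp_term z (S n)
  = RtoC (/ INR (fact (S (S n)))) * Cpow_remainder z h n.
Proof.
  unfold exp_term, Cpow_remainder.
  change (fact (S (S n))) with (S (S n) * fact (S n))%nat.
  assert (Hn : INR (S (S n)) <> 0) by (apply not_0_INR; lia).
  pose proof (INR_fact_neq_0 (S n)) as Hf.
  rewrite mult_INR, Rinv_mult, RtoC_mult.
  set (m := INR (S (S n))). set (f := INR (fact (S n))).
  assert (Hm : RtoC (/ m) * RtoC m = 1) by (rewrite <- RtoC_mult, Rinv_l; auto).
  transitivity ((RtoC (/ m) * RtoC (/ f)) * ((z + h) ^ S (S n) - z ^ S (S n))
                - RtoC (/ f) * h * z ^ S n * (RtoC (/ m) * RtoC m)); [rewrite Hm|]; ring.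
Qed.

Lemma Cmod_exp_term_remainder_le (z h : C) (n : nat) :
  (Cmod (RtoC (/ INR (fact (S (S n)))) * Cpow_remainder z h n)
  <= Cmod h ^ 2 * ((Cmod z + Cmod h) ^ n / INR (fact n)))%R.
Proof.
  pose proof (INR_fact_lt_0 n). pose proof (pos_INR n).
  assert (Hw : 0 <= Cmod h ^ 2 * (Cmod z + Cmod h) ^ n).
  { apply Rmult_le_pos; [apply pow2_ge_0|].
    apply pow_le. pose proof (Cmod_ge_0 z). pose proof (Cmod_ge_0 h). lra. }
  rewrite Cmod_mult, Cmod_R, Rabs_pos_eq
    by (left; apply Rinv_0_lt_compat, INR_fact_lt_0).
  eapply Rle_trans.
  { apply Rmult_le_compat_l; [left; apply Rinv_0_lt_compat, INR_fact_lt_0|].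
    apply Cmod_Cpow_remainder_le. }
  change (fact (S (S n))) with (S (S n) * (S n * fact n))%nat.
  rewrite !mult_INR, !S_INR.
  replace (/ ((INR n + 1 + 1) * ((INR n + 1) * INR (fact n)))
           * ((INR n + 1) * (INR n + 1 + 1) / 2 * Cmod h ^ 2 * (Cmod z + Cmod h) ^ n))%R
    with (Cmod h ^ 2 * (Cmod z + Cmod h) ^ n / (2 * INR (fact n)))%R by (field; lra).
  unfold Rdiv. rewrite <- Rmult_assoc.
  apply Rmult_le_compat_l; [exact Hw|].
  apply Rinv_le_contravar; lra.
Qed.

Lemma Cmod_Cexp_remainder_le (z h : C) :
  (Cmod (Cexp (z + h) - Cexp z - h * Cexp z) <= Cmod h ^ 2 * exp (Cmod z + Cmod h))%R.
Proof.
  assert (Hshift2 : forall w, is_series (V := C_NormedModule)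
            (fun n => exp_term w (S (S n))) (Cexp w - 1 - w)).
  { intros w.
    replace (Cexp w - 1 - w) with (Cexp w - exp_term w 0 - exp_term w 1)
      by (rewrite exp_term_0, exp_term_1; reflexivity).
    apply (is_series_shift (fun n => exp_term w (S n))), is_series_shift, is_series_Cexp. }
  assert (Hrem : is_series (V := C_NormedModule)
            (fun n => exp_term (z + h) (S (S n)) - exp_term z (S (S n)) - h * exp_term z (S n))
            (Cexp (z + h) - Cexp z - h * Cexp z)).
  { pose proof (is_series_scal (K := C_AbsRing) h _ _ (is_series_shift _ _ (is_series_Cexp z)))
      as Hh.
    pose proof (is_series_minus _ _ _ _
                  (is_series_minus _ _ _ _ (Hshift2 (z + h)) (Hshift2 z)) Hh) as H.
    rewrite exp_term_0 in H.
    replace (Cexp (z + h) - Cexp z - h * Cexp z)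
      with (Cexp (z + h) - 1 - (z + h) - (Cexp z - 1 - z) - h * (Cexp z - 1)) by ring.
    exact H. }
  apply (Cmod_series_le _ (fun n => Cmod h ^ 2 * ((Cmod z + Cmod h) ^ n / INR (fact n)))%R
           _ _ Hrem).
  - exact (is_series_scal (K := R_AbsRing) (V := R_NormedModule) _ _ _ (is_series_exp _)).
  - intros n. rewrite exp_term_remainder. apply Cmod_exp_term_remainder_le.
Qed.

Lemma Cderiv_Cexp (z : C) : Cderiv Cexp z (Cexp z).
Proof.
  apply Cderiv_of_quadratic_remainder with (K := exp (Cmod z + 1)); [left; apply exp_pos|].
  intros h Hh. eapply Rle_trans; [apply Cmod_Cexp_remainder_le|].
  rewrite Rmult_comm. apply Rmult_le_compat_r; [apply pow2_ge_0|].
  destruct Hh as [Hh | ->]; [left; apply exp_increasing; lra | right; reflexivity].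
Qed.

Lemma Cderiv_Cexp_scal (c z : C) : Cderiv (fun v => Cexp (c * v)) z (c * Cexp (c * z)).
Proof.
  apply Cderiv_comp; [apply Cderiv_Cexp|].
  apply Cderiv_of_quadratic_remainder with (K := 0); [lra|].
  intros h _. replace (c * (z + h) - c * z - h * c) with (RtoC 0) by ring.
  rewrite Cmod_0. lra.
Qed.

Lemma Cexp_0 : Cexp 0 = 1.
Proof.
  apply Cseries_correct.
  assert (Hsum : forall N, sum_n (exp_term 0) N = RtoC 1).
  { induction N as [|N IH].
    - rewrite sum_O. apply exp_term_0.
    - rewrite sum_Sn, IH. unfold exp_term.
      change (1 + RtoC (/ INR (fact (S N))) * (0 * 0 ^ N) = 1). ring. }
  unfold is_series. eapply filterlim_ext; [intros N; symmetry; apply Hsum|].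
  apply filterlim_const.
Qed.

Lemma Cexp_mul_Cexp_opp (w : C) : Cexp w * Cexp (- w) = 1.
Proof.
  set (Q := fun v => Cexp v * Cexp (RtoC (-1) * v)).
  assert (HQ : forall v, Cderiv Q v 0).
  { intros v.
    assert (H := Cderiv_mult _ _ v _ _ (Cderiv_Cexp v) (Cderiv_Cexp_scal (RtoC (-1)) v)).
    cbv beta in H.
    replace (Cexp v * Cexp (RtoC (-1) * v) + Cexp v * (RtoC (-1) * Cexp (RtoC (-1) * v)))
      with (RtoC 0) in H by ring.
    exact H. }
  replace (- w) with (RtoC (-1) * w) by ring.
  change (Q w = 1). rewrite (Cderiv_zero_constant Q HQ w). unfold Q.
  rewrite Cmult_0_r, Cexp_0. ring.
Qed.

Lemma Cderiv_Csin (z : C) : Cderiv Csin z (Ccos z).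
Proof.
  pose proof (Cderiv_mult_const _ z _ (/ (2 * Ci))
                (Cderiv_minus _ _ z _ _ (Cderiv_Cexp_scal Ci z) (Cderiv_Cexp_scal (- Ci) z))) as H.
  replace ((Ci * Cexp (Ci * z) - - Ci * Cexp (- Ci * z)) * / (2 * Ci)) with (Ccos z) in H.
  - eapply is_derive_ext; [|exact H]. intros v. unfold Csin, Cdiv.
    replace (- Ci * v) with (- (Ci * v)) by ring. reflexivity.
  - unfold Ccos, Cdiv. replace (- Ci * z) with (- (Ci * z)) by ring.
    field. exact Ci_nz.
Qed.

Lemma Cderiv_Ccos (z : C) : Cderiv Ccos z (- Csin z).
Proof.
  pose proof (Cderiv_mult_const _ z _ (/ 2)
                (Cderiv_plus _ _ z _ _ (Cderiv_Cexp_scal Ci z) (Cderiv_Cexp_scal (- Ci) z))) as H.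
  replace ((Ci * Cexp (Ci * z) + - Ci * Cexp (- Ci * z)) * / 2) with (- Csin z) in H.
  - eapply is_derive_ext; [|exact H]. intros v. unfold Ccos, Cdiv.
    replace (- Ci * v) with (- (Ci * v)) by ring. reflexivity.
  - unfold Csin, Cdiv. replace (- Ci * z) with (- (Ci * z)) by ring.
    destruct (Cexp (Ci * z)) as [a b], (Cexp (- (Ci * z))) as [c d].
    apply injective_projections; simpl; field.
Qed.

Lemma Csin_sqr_add_Ccos_sqr (z : C) : Csin z * Csin z + Ccos z * Ccos z = 1.
Proof.
  rewrite <- (Cexp_mul_Cexp_opp (Ci * z)). unfold Csin, Ccos, Cdiv.
  destruct (Cexp (Ci * z)) as [a b], (Cexp (- (Ci * z))) as [c d].
  apply injective_projections; simpl; field; lra.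
Qed.

Lemma Ccos_sqr_deriv_sqr (kappa : R) (a b da db : C) :
  Csin b = kappa * Csin a -> db * Ccos b = da * Ccos a * kappa ->
  Ccos b * Ccos b * ((db * - Csin b) * (db * - Csin b))
  = da * da * ((1 - Ccos b * Ccos b) * (Ccos b * Ccos b - RtoC (1 - kappa ^ 2))).
Proof.
  intros Hsin Hchain.
  assert (Hb : Ccos b * Ccos b = 1 - Csin b * Csin b)
    by (rewrite <- (Csin_sqr_add_Ccos_sqr b); ring).
  assert (Ha : Ccos a * Ccos a = 1 - Csin a * Csin a)
    by (rewrite <- (Csin_sqr_add_Ccos_sqr a); ring).
  transitivity (Csin b * Csin b * ((db * Ccos b) * (db * Ccos b))); [ring|].
  rewrite Hchain, Hb, Hsin. rewrite RtoC_minus, RtoC_pow.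
  transitivity (RtoC kappa ^ 4 * (Csin a * Csin a) * (da * da) * (Ccos a * Ccos a)); [ring|].
  rewrite Ha. ring.
Qed.

End ComplexAnalysis.

Theorem theorem3 (kappa : R) (hk0 : 0 < kappa) (hk1 : kappa < 1)
  (r : R) (hr : 0 < r)
  (phi psi delta psi' d' : C -> C)
  (hphi_hol : forall w, in_disc r w -> Cderiv phi w (delta w))
  (hphi0 : phi (RtoC 0) = RtoC 0)
  (hphi_inv : forall w, in_disc r w -> u_of kappa (phi w) = w)
  (hpsi_hol : forall w, in_disc r w -> Cderiv psi w (psi' w))
  (hpsi0 : psi (RtoC 0) = RtoC 0)
  (hpsi : forall w, in_disc r w -> Csin (psi w) = Cmult (RtoC kappa) (Csin (phi w)))
  (hd' : forall w, in_disc r w -> Cderiv (fun v => Ccos (psi v)) w (d' w)) :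
  let lambda := sqrt (1 - kappa ^ 2) in
  forall w, in_disc r w ->
    let d := Ccos (psi w) in
    Cmult (Cmult d d) (Cmult (d' w) (d' w)) =
    Cmult (Cmult (delta w) (delta w))
          (Cmult (Cminus (RtoC 1) (Cmult d d))
                 (Cminus (Cmult d d) (RtoC (lambda ^ 2)))).
Proof.
  intros lambda w Hw d.
  assert (Hlambda : lambda ^ 2 = 1 - kappa ^ 2) by (apply pow2_sqrt; nra).
  assert (Hd' : d' w = Cmult (psi' w) (Copp (Csin (psi w)))).
  { apply (Cderiv_unique (fun v => Ccos (psi v)) w); [apply hd', Hw|].
    apply Cderiv_comp; [apply Cderiv_Ccos | apply hpsi_hol, Hw]. }
  assert (Hchain : Cmult (psi' w) (Ccos (psi w))
                   = Cmult (Cmult (delta w) (Ccos (phi w))) (RtoC kappa)).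
  { apply (Cderiv_unique (fun v => Csin (psi v)) w).
    - apply Cderiv_comp; [apply Cderiv_Csin | apply hpsi_hol, Hw].
    - apply (is_derive_ext_loc (fun v => Cmult (Csin (phi v)) (RtoC kappa))).
      + apply (filter_imp (in_disc r)); [|apply locally_in_disc, Hw].
        intros v Hv. rewrite hpsi by exact Hv. apply Cmult_comm.
      + apply Cderiv_mult_const, Cderiv_comp; [apply Cderiv_Csin | apply hphi_hol, Hw]. }
  rewrite Hd', Hlambda.
  exact (Ccos_sqr_deriv_sqr kappa (phi w) (psi w) _ _ (hpsi w Hw) Hchain).
Qed.
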